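(* Let $S=[a+1,a+m]$ with $a+m\le n$ and let $r\ge0$. Let $c_1,\dots,c_{r+1}\in S$, let $\lambda=(\lambda_1,\dots,\lambda_d)$ be a composition of $r+1$ with partial sums $p_j=\sum_{i=1}^j\lambda_i$ ($p_0=0$), let $\gamma_1,\dots,\gamma_d$ be nonnegative integers with $\gamma_j\ge\gamma_{j-1}+\lambda_{j-1}$ for $j\ge2$, set $\delta_j=k-\lambda_j-\gamma_j$, and let $a_{j,i},b_{j,i}\in[n]$ be arbitrary. Then the polynomial $$\sum_{\sigma\in\mathfrak S_{r+1}}\operatorname{sign}(\sigma)\prod_{j=1}^d[a_{j,1},\dots,a_{j,\gamma_j},c_{\sigma(p_{j-1}+1)},\dots,c_{\sigma(p_j)},b_{j,1},\dots,b_{j,\delta_j}]$$ vanishes on $X_{S\le r}$, i.e. lies in the ideal $\mathcal J_{S\le r}$.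
   Context: Let $\Bbbk$ be algebraically closed of characteristic $0$, $1\le k<n$. $R(k,n)=\Bbbk[[\mathbf a]:\mathbf a\in\binom{[n]}{k}]$ is the polynomial ring in Plücker variables. For a sequence $x_1,\dots,x_k$ in $[n]$, $[x_1,\dots,x_k]$ is $0$ if two entries coincide and otherwise $\operatorname{sign}(\tau)[\{x_1,\dots,x_k\}]$, $\tau$ the sorting permutation (so it represents the $k\times k$ minor on columns $x_1,\dots,x_k$ in that order). For $S\subseteq[n]$, $r\ge0$, $X_{S\le r}=\{V\in\mathrm{Gr}(k,n):\text{the columns indexed by }S\text{ of a matrix with row span }V\text{ have rank}\le r\}$, and $\mathcal J_{S\le r}\subseteq R(k,n)$ is its defining ideal under the Plücker embedding. *)

From HB Require Import structures.
From mathcomp Require Import all_boot all_order all_algebra all_fingroup.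
From mathcomp Require Import mpoly.
Set Implicit Arguments. Unset Strict Implicit. Unset Printing Implicit Defensive.
Import GRing.Theory.
Local Open Scope ring_scope.

(* Columns [n] = {1..n} are represented by ordinals 'I_n (column x <-> ordinal x-1). *)

Definition kset (k n : nat) := {A : {set 'I_n} | #|A| == k}.

Definition npl (k n : nat) := #|{: kset k n}|.

Definition plring (F : fieldType) (k n : nat) := {mpoly F[npl k n]}.

Definition pvar (F : fieldType) (k n : nat) (A : kset k n) : plring F k n :=
  'X_(enum_rank A).

(* number of inversions of a sequence; the sign of the sorting permutation
   of a duplicate-free sequence is (-1)^inversions *)
Definition inversions n (x : seq 'I_n) : nat :=
  \sum_(i < size x) \sum_(j < size x | i < j)
     ((nth 0%N (map val x) j < nth 0%N (map val x) i)%N : nat).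

(* The bracket [x_1,...,x_k]: 0 if two entries coincide (or if the sequence
   does not have length k), otherwise sign(tau) [ {x_1,...,x_k} ]. *)
Definition bracket (F : fieldType) (k n : nat) (x : seq 'I_n) : plring F k n :=
  match (insub [set i in x] : option (kset k n)) with
  | Some A =>
      if uniq x && (size x == k) then (-1) ^+ inversions x * pvar F A else 0
  | None => 0
  end.

(* the columns of A, in increasing order *)
Definition kcols k n (A : kset k n) (i : 'I_k) : 'I_n :=
  @enum_val _ (mem (val A)) (cast_ord (esym (eqP (valP A))) i).

Definition pluecker (F : fieldType) k n (M : 'M[F]_(k, n)) (A : kset k n) : F :=
  \det (colsub (@kcols k n A) M).

Definition pl_val (F : fieldType) k n (M : 'M[F]_(k, n)) : 'I_(npl k n) -> F :=
  fun i => pluecker M (enum_val i).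

Definition cols_S (F : fieldType) k n (S : {set 'I_n}) (M : 'M[F]_(k, n)) :=
  colsub (fun j : 'I_#|S| => @enum_val _ (mem S) j) M.

(* M (of full rank k, so that its row span V is a point of Gr(k,n))
   represents a point of X_{S <= r} *)
Definition in_X (F : fieldType) k n (S : {set 'I_n}) (r : nat) (M : 'M[F]_(k, n)) :=
  (\rank M == k)%N && (\rank (cols_S S M) <= r)%N.

(* J_{S<=r}: the ideal of all polynomials of R(k,n) vanishing on X_{S<=r}
   (under the Plücker embedding, i.e. on the affine cone) *)
Definition J_ideal (F : fieldType) k n (S : {set 'I_n}) (r : nat)
    (p : plring F k n) : Prop :=
  forall M : 'M[F]_(k, n), in_X S r M -> p.@[pl_val M] = 0.

(* the interval S = [a+1, a+m] of [n], as ordinals a <= i < a+m *)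
Definition ivS n (a m : nat) : {set 'I_n} := [set i : 'I_n | (a <= i < a + m)%N].

(* Evaluated at a k x n matrix M, a bracket is the determinant of the rows of
   M^T (columns of M) it names, once its sign is matched with the inversions of
   its entries by bubble sort.  The polynomial thus becomes
   sum_s sign(s) T(u_(s 1), ..., u_(s (r+1))), where u_l is the column c_l of M
   and T is a product of determinants in which every u_l fills exactly one row
   of one factor; so T is multilinear, and its antisymmetrization is
   multilinear and, as 2 <> 0 in F, alternating.  Such a form vanishes on
   linearly dependent families, and on X_{S<=r} the r+1 columns c_l, all
   indexed by S, span a space of dimension at most r. *)

From HB Require Import structures.
From mathcomp Require Import all_boot all_order all_algebra all_fingroup.
From mathcomp Require Import mpoly zify.
Set Implicit Arguments.
Unset Strict Implicit.
Unset Printing Implicit Defensive.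
Import GRing.Theory.
Local Open Scope ring_scope.

Fixpoint ninversions (s : seq nat) : nat :=
  if s is x :: t then (count (fun y => y < x) t + ninversions t)%N else 0%N.

Lemma ninversions_swap s1 a b s2 : (b < a)%N ->
  ninversions (s1 ++ a :: b :: s2) = (ninversions (s1 ++ b :: a :: s2)).+1.
Proof.
move=> ba; elim: s1 => [|y s1 IH] /=; first by rewrite ba ltnNge (ltnW ba); lia.
by rewrite IH !count_cat /=; lia.
Qed.

Lemma ninversions_sorted s : sorted leq s -> ninversions s = 0%N.
Proof.
elim: s => [|a t IH] //= st; rewrite IH ?(path_sorted st) // addn0.
apply/eqP; rewrite -leqn0 leqNgt -has_count; apply/hasPn => z.
by move/(allP (order_path_min leq_trans st)); rewrite /= -leqNgt.
Qed.

Lemma inversionsE n (x : seq 'I_n) : inversions x = ninversions (map val x).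
Proof.
rewrite /inversions -(size_map val); elim: (map val x) => [|y s IH] /=.
  by rewrite big_ord0.
rewrite big_ord_recl -IH big_mkcond big_ord_recl /= add0n; congr (_ + _)%N.
  rewrite -sum1_count (big_nth 0%N) big_mkord [RHS]big_mkcond.
  by apply: eq_bigr => i _; case: (_ < _)%N.
apply: eq_bigr => i _; rewrite big_mkcond big_ord_recl /= add0n [RHS]big_mkcond.
by apply: eq_bigr => j _; rewrite /bump !add1n ltnS.
Qed.

Lemma unsorted_split (T : Type) (e : rel T) (s : seq T) : ~~ sorted e s ->
  exists s1 a b s2, s = s1 ++ a :: b :: s2 /\ ~~ e a b.
Proof.
elim: s => [|a [|b t] IH] //=.
case eab: (e a b) => /=; last by exists [::], a, b, t; rewrite eab.
by move=> /IH [s1 [x [y [s2 [-> nxy]]]]]; exists (a :: s1), x, y, s2.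
Qed.

Section DetRows.
Variables (F : fieldType) (k : nat).

Definition det_rows (ys : seq 'rV[F]_k) : F := \det (\matrix_(i < k) nth 0 ys i).

Lemma det_rows_scalar s1 s2 : (size s1 < k)%N ->
  scalar (fun x => det_rows (s1 ++ x :: s2)).
Proof.
have setE z : s1 ++ z :: s2 = set_nth 0 (s1 ++ 0 :: s2) (size s1) z.
  by elim: s1 => //= ? ? ->.
move=> lt_s1k a x y /=; pose i := Ordinal lt_s1k.
rewrite (setE (a *: x + y)) (setE x) (setE y) -[X in _ = _ + X]mul1r.
have liftE j : (lift i j == size s1 :> nat) = false.
  by apply/negbTE; rewrite eq_sym; exact: neq_lift.
apply: (determinant_multilinear (i0 := i)).
- by rewrite !rowK !nth_set_nth /= eqxx scale1r.
- by apply/row_matrixP => j; rewrite !row'Esub !row_rowsub !rowK !nth_set_nth /= liftE.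
- by apply/row_matrixP => j; rewrite !row'Esub !row_rowsub !rowK !nth_set_nth /= liftE.
Qed.

Lemma det_rows_swap s1 a b s2 : size (s1 ++ a :: b :: s2) = k ->
  det_rows (s1 ++ b :: a :: s2) = - det_rows (s1 ++ a :: b :: s2).
Proof.
rewrite size_cat /= => sz.
have lt1 : (size s1 < k)%N by lia.
have lt2 : ((size s1).+1 < k)%N by lia.
pose i1 := Ordinal lt1; pose i2 := Ordinal lt2; rewrite /det_rows.
have -> : \matrix_(i < k) nth 0 (s1 ++ b :: a :: s2) i
        = xrow i1 i2 (\matrix_(i < k) nth 0 (s1 ++ a :: b :: s2) i).
  apply/row_matrixP => j; rewrite xrowEsub row_rowsub !rowK !nth_cat.
  case: tpermP => [->|->|/eqP ne1 /eqP ne2] /=;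
    rewrite ?ltnn ?subnn ?ltnNge ?leqnSn ?subSnn //=.
  rewrite -!val_eqE /= in ne1 ne2.
  case: ltnP => // le; case E: (j - size s1)%N => [|[|?]] //=; lia.
rewrite xrowE det_mulmx det_perm odd_tperm.
have -> : i1 != i2 by rewrite -val_eqE /= neq_ltn ltnSn.
by rewrite expr1 mulN1r.
Qed.

Lemma det_rows_repeat ys i j :
  (i < j < k)%N -> nth 0 ys i = nth 0 ys j -> det_rows ys = 0.
Proof.
move=> /andP [ij jk] e; have ik : (i < k)%N by lia.
apply: (@determinant_alternate _ _ _ (Ordinal ik) (Ordinal jk)).
  by rewrite -val_eqE /= neq_ltn ij.
by move=> l; rewrite !mxE /= e.
Qed.

End DetRows.

Section BracketEval.
Variables (F : fieldType) (k n : nat) (M : 'M[F]_(k, n)).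

Lemma sorted_enum_set (x : seq 'I_n) : uniq x -> sorted (relpre val leq) x ->
  x = enum [set i in x].
Proof.
move=> ux sx; apply: (inj_map val_inj); apply: (irr_sorted_eq ltn_trans ltnn).
- by rewrite ltn_sorted_uniq_leq (map_inj_uniq val_inj) ux sorted_map sx.
- apply: (subseq_sorted ltn_trans (s2 := map val (enum 'I_n))).
    by apply: map_subseq; rewrite enumT /enum_mem; exact: filter_subseq.
  by rewrite val_enum_ord iota_ltn_sorted.
- by apply: eq_mem_map => i; rewrite mem_enum inE.
Qed.

Lemma det_rows_sort (x : seq 'I_n) : uniq x -> size x = k ->
  det_rows [seq row i M^T | i <- x]
  = (-1) ^+ ninversions (map val x) * det_rows [seq row i M^T | i <- enum [set i in x]].
Proof.
have [N] := ubnP (ninversions (map val x)); elim: N x => // N IH x ltxN ux sx.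
have [x_sorted | /unsorted_split [x1 [a [b [x2 [Ex ba]]]]]] :=
  boolP (sorted (relpre val leq) x).
  by rewrite -sorted_enum_set // ninversions_sorted ?sorted_map // expr0 mul1r.
rewrite /= -ltnNge in ba.
set y := x1 ++ b :: a :: x2.
have perm_yx : perm_eq y x.
  by rewrite Ex perm_cat2l -[b :: a :: x2]/([:: b] ++ [:: a] ++ x2) perm_catCA.
have ninversionsE : ninversions (map val x) = (ninversions (map val y)).+1.
  by rewrite Ex !map_cat ninversions_swap.
have -> : [set i in x] = [set i in y] by apply/setP => i; rewrite !inE (perm_mem perm_yx).
have -> : det_rows [seq row i M^T | i <- x] = - det_rows [seq row i M^T | i <- y].
  rewrite Ex /y !map_cat /= det_rows_swap ?opprK //.
  by move: sx; rewrite Ex !size_cat /= !size_map.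
rewrite IH ?(perm_uniq perm_yx) ?(perm_size perm_yx) -?ninversionsE //.
by rewrite ninversionsE exprS mulN1r mulNr.
Qed.

Lemma pluecker_det_rows (A : kset k n) :
  pluecker M A = det_rows [seq row i M^T | i <- enum (val A)].
Proof.
rewrite /pluecker -det_tr; congr (\det _); apply/matrixP => i j; rewrite !mxE.
have sizeA : size (enum (val A)) = k by rewrite -cardE (eqP (valP A)).
rewrite (nth_map (kcols A i)) ?sizeA // !mxE.
by congr (M j _); rewrite /kcols /enum_val /=; apply: set_nth_default; rewrite sizeA.
Qed.

Lemma bracket_eval (x : seq 'I_n) : size x = k ->
  (bracket F k x).@[pl_val M] = det_rows [seq row i M^T | i <- x].
Proof.
move=> sx; have [ux | nux] := boolP (uniq x).
  have cardx : #|[set i in x]| == k by rewrite cardsE (card_uniqP ux) sx.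
  rewrite /bracket (insubT (fun A : {set 'I_n} => #|A| == k) cardx) ux sx eqxx /=.
  rewrite mevalM rmorphXn rmorphN1 /pvar mevalXU /pl_val enum_rankK.
  by rewrite inversionsE pluecker_det_rows (det_rows_sort ux sx) SubK.
have -> : bracket F k x = 0.
  by rewrite /bracket; case: insubP => //= *; rewrite (negbTE nux).
case: x sx nux => [|x0 x] sx // /(uniqPn x0) [i [j [ij jx xij]]].
rewrite meval0; symmetry; apply: (det_rows_repeat (i := i) (j := j)).
  by rewrite ij -sx.
by rewrite !(nth_map x0) ?xij //; exact: ltn_trans ij jx.
Qed.

End BracketEval.

Section Multilinear.
Variables (F : fieldType) (V : lmodType F) (N : nat).

Definition ffun_upd (u : {ffun 'I_N -> V}) (i : 'I_N) (x : V) : {ffun 'I_N -> V} :=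
  [ffun l => if l == i then x else u l].

Definition multilinear (G : {ffun 'I_N -> V} -> F) :=
  forall u i, scalar (fun x => G (ffun_upd u i x)).

Definition alternating (G : {ffun 'I_N -> V} -> F) :=
  forall (u : {ffun 'I_N -> V}) i j, i != j -> u i = u j -> G u = 0.

Lemma ffun_upd_id u i : ffun_upd u i (u i) = u.
Proof. by apply/ffunP => l; rewrite ffunE; case: eqP => [->|]. Qed.

Lemma multilinear_dependent G (u : {ffun 'I_N -> V}) (w : 'I_N -> F) i :
  multilinear G -> alternating G ->
  \sum_l w l *: u l = 0 -> w i != 0 -> G u = 0.
Proof.
move=> G_lin G_alt wu0 wi.
pose phi : {scalar V} := HB.pack (fun x => G (ffun_upd u i x))
  (GRing.isLinear.Build _ _ _ _ _ (G_lin u i)).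
have : phi (\sum_l w l *: u l) = w i * G u.
  rewrite linear_sum (bigD1 i) // big1 => [|l li]; rewrite linearZ /=.
    by rewrite ffun_upd_id addr0.
  rewrite (G_alt _ i l) ?mulr0 1?eq_sym // !ffunE eqxx.
  by rewrite (negbTE li).
by rewrite wu0 linear0 => /esym /eqP; rewrite mulf_eq0 (negbTE wi) => /eqP.
Qed.

Definition antisym (T : {ffun 'I_N -> V} -> F) (u : {ffun 'I_N -> V}) : F :=
  \sum_(s : 'S_N) (-1) ^+ s * T [ffun l => u (s l)].

Lemma ffun_upd_perm u i x (s : 'S_N) :
  [ffun l => ffun_upd u i x (s l)] = ffun_upd [ffun l => u (s l)] (s^-1 i)%g x.
Proof. by apply/ffunP => l; rewrite !ffunE (canF_eq (permK s)). Qed.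

Lemma antisym_multilinear T : multilinear T -> multilinear (antisym T).
Proof.
move=> T_lin u i a x y; rewrite /antisym mulr_sumr -big_split.
by apply: eq_bigr => s _ /=; rewrite !ffun_upd_perm T_lin mulrDr mulrCA.
Qed.

Lemma antisym_alternating T : (2%:R : F) != 0 -> alternating (antisym T).
Proof.
move=> two_neq0 u i j ij uij.
have : antisym T u = - antisym T u.
  rewrite {1}/antisym (reindex_inj (mulIg (tperm i j))) -sumrN.
  apply: eq_bigr => s _; rewrite odd_permM odd_tperm ij signr_addb expr1 mulrN1 mulNr.
  congr (- (_ * T _)); apply/ffunP => l; rewrite !ffunE permM.
  by case: tpermP => [->|->|].
move/eqP; rewrite -subr_eq0 opprK -mulr2n -mulr_natl mulf_eq0 (negbTE two_neq0).
by move/eqP.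
Qed.

End Multilinear.

Section ProdDetRows.
Variables (F : fieldType) (k N : nat) (I : eqType).
Variables (A B : I -> seq 'rV[F]_k) (blk : I -> seq 'I_N).

Definition prod_det_rows (js : seq I) (v : {ffun 'I_N -> 'rV[F]_k}) : F :=
  \prod_(j <- js) det_rows (A j ++ map v (blk j) ++ B j).

Lemma map_ffun_upd_notin (u : {ffun 'I_N -> 'rV[F]_k}) i x s :
  i \notin s -> map (ffun_upd u i x) s = map u s.
Proof.
move=> iNs; apply/eq_in_map => l ls; rewrite ffunE.
by case: eqP => // li; rewrite -li ls in iNs.
Qed.

Lemma det_rows_upd_scalar As Bs (u : {ffun 'I_N -> 'rV[F]_k}) i (s : seq 'I_N) :
  count_mem i s = 1%N -> (size As + size s + size Bs)%N = k ->
  scalar (fun x => det_rows (As ++ map (ffun_upd u i x) s ++ Bs)).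
Proof.
move=> once; have i_s : i \in s by rewrite -has_pred1 has_count once.
move: once; case/splitPr: i_s => s1 s2 once sz.
move/eqP: once; rewrite count_cat /= eqxx add1n addnS eqSS addn_eq0.
case/andP => /eqP/count_memPn i_s1 /eqP/count_memPn i_s2.
have lt_k : (size (As ++ map u s1) < k)%N.
  by move: sz; rewrite size_cat size_map !size_cat /=; lia.
have catE z : As ++ map (ffun_upd u i z) (s1 ++ i :: s2) ++ Bs
             = (As ++ map u s1) ++ z :: map u s2 ++ Bs.
  by rewrite map_cat /= !map_ffun_upd_notin // ffunE eqxx -!catA.
move=> a x y /=; rewrite !catE; exact: det_rows_scalar.
Qed.

Lemma prod_det_rows_upd_scalar js u i :
  (forall j, j \in js -> size (A j) + size (blk j) + size (B j) = k)%N ->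
  count_mem i (flatten (map blk js)) = 1%N ->
  scalar (fun x => prod_det_rows js (ffun_upd u i x)).
Proof.
rewrite /prod_det_rows; elim: js => [|j js IH] //= sz; rewrite count_cat.
have sz_j := sz j (mem_head j js).
have {}sz j' : j' \in js -> (size (A j') + size (blk j') + size (B j') = k)%N.
  by move=> j'js; apply: sz; rewrite inE j'js orbT.
case E: (count_mem i (blk j)) => [|[|?]] //= once a x y; rewrite !big_cons.
  have /count_memPn iNj := E.
  rewrite add0n in once.
  by rewrite !(map_ffun_upd_notin u _ iNj) IH // mulrDr mulrCA.
have /count_memPn iNflat : count_mem i (flatten (map blk js)) = 0%N.
  by move: once; rewrite add1n => -[].
have rest_const z :
    \prod_(j' <- js) det_rows (A j' ++ map (ffun_upd u i z) (blk j') ++ B j')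
  = \prod_(j' <- js) det_rows (A j' ++ map u (blk j') ++ B j').
  apply: eq_big_seq => j' j'js; rewrite map_ffun_upd_notin //.
  by apply: contra iNflat => i_j'; apply/flatten_mapP; exists j'.
by rewrite !rest_const det_rows_upd_scalar // mulrDl mulrA.
Qed.

Lemma prod_det_rows_multilinear js :
  (forall j, j \in js -> size (A j) + size (blk j) + size (B j) = k)%N ->
  (forall i, count_mem i (flatten (map blk js)) = 1%N) ->
  multilinear (prod_det_rows js).
Proof. by move=> sz once u i; exact: prod_det_rows_upd_scalar. Qed.

End ProdDetRows.

Lemma rows_dependent (F : fieldType) N k (W : 'M[F]_(N, k)) : (\rank W < N)%N ->
  exists w : 'I_N -> F, exists2 i, w i != 0 & \sum_l w l *: row l W = 0.
Proof.
move=> rkW; have /rowV0Pn [v /sub_kermxP vW0 /rV0Pn [i vi]] : kermx W != 0.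
  by rewrite kermx_eq0 /row_free neq_ltn rkW.
by exists (v 0), i; rewrite // -mulmx_sum_row.
Qed.

Lemma rank_rowsub_cols_S (F : fieldType) k n N (S : {set 'I_n}) (c : 'I_N -> 'I_n)
    (M : 'M[F]_(k, n)) :
  (forall l, c l \in S) -> (\rank (rowsub c M^T) <= \rank (cols_S S M))%N.
Proof.
move=> cS; pose idx l := enum_rank_in (cS l) (c l).
have -> : rowsub c M^T = rowsub ((fun j : 'I_#|S| => enum_val j) \o idx) M^T.
  by apply: eq_rowsub => l; rewrite /= enum_rankK_in.
rewrite -[X in (_ <= X)%N]mxrank_tr /cols_S trmx_mxsub.
by apply: mxrankS; exact: rowsub_comp_sub.
Qed.

Lemma flatten_iota_partial_sums (lam : nat -> nat) d :
  let p j := (\sum_(1 <= i < j.+1) lam i)%N in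
  flatten [seq iota (p j.-1) (lam j) | j <- index_iota 1 d.+1] = iota 0 (p d).
Proof.
move=> p; rewrite [in LHS]/index_iota subn1 /=.
elim: d => [|d IH]; first by rewrite /p big_geq.
have -> : iota 1 d.+1 = iota 1 d ++ [:: d.+1] by rewrite -(addn1 d) iotaD addnC.
rewrite map_cat flatten_cat IH /= cats0.
by rewrite /p [in RHS]big_nat_recr //= iotaD.
Qed.

Lemma count_mem_composition_blocks (lam : nat -> nat) d N (i : 'I_N.+1) :
  let p j := (\sum_(1 <= i < j.+1) lam i)%N in
  p d = N.+1 ->
  count_mem i (flatten [seq [seq inord l : 'I_N.+1 | l <- iota (p j.-1) (lam j)]
                       | j <- index_iota 1 d.+1]) = 1%N.
Proof.
move=> p pd; rewrite (map_comp (map inord) (fun j => iota (p j.-1) (lam j))).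
rewrite -map_flatten flatten_iota_partial_sums -/(p d) pd -val_enum_ord -map_comp.
by rewrite (eq_map (@inord_val N)) map_id count_uniq_mem ?enum_uniq ?mem_enum.
Qed.

Theorem proposition5p1
  (F : closedFieldType) (hchar : [pchar F] =i pred0)
  (k n : nat) (hk1 : (1 <= k)%N) (hkn : (k < n)%N)
  (a m : nat) (ham : (a + m <= n)%N) (r : nat)
  (c : 'I_r.+1 -> 'I_n) (hc : forall i, c i \in @ivS n a m)
  (d : nat) (lambda : nat -> nat)
  (hlpos : forall j, (1 <= j <= d)%N -> (1 <= lambda j)%N)
  (hlsum : (\sum_(1 <= j < d.+1) lambda j)%N = r.+1)
  (gamma : nat -> nat)
  (hgam : forall j, (2 <= j <= d)%N -> (gamma (j.-1) + lambda (j.-1) <= gamma j)%N)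
  (hdel : forall j, (1 <= j <= d)%N -> (lambda j + gamma j <= k)%N)
  (av bv : nat -> nat -> 'I_n) :
  let p := fun j => (\sum_(1 <= i < j.+1) lambda i)%N in
  let delta := fun j => (k - lambda j - gamma j)%N in
  J_ideal (@ivS n a m) r
    (\sum_(s : 'S_r.+1) (-1) ^+ s *
       \prod_(1 <= j < d.+1)
          bracket F k
            ([seq av j i | i <- iota 1 (gamma j)]
             ++ [seq c (s (inord i)) | i <- iota (p j.-1) (lambda j)]
             ++ [seq bv j i | i <- iota 1 (delta j)])).
Proof.
move=> p delta M /andP [_ rank_S].
pose u := [ffun l => row (c l) M^T].
pose A j := [seq row (av j i) M^T | i <- iota 1 (gamma j)].
pose B j := [seq row (bv j i) M^T | i <- iota 1 (delta j)].
pose blk j := [seq inord i : 'I_r.+1 | i <- iota (p j.-1) (lambda j)].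
have sizes j :
    j \in index_iota 1 d.+1 -> (size (A j) + size (blk j) + size (B j) = k)%N.
  by rewrite mem_index_iota => /hdel; rewrite !size_map !size_iota /delta; lia.
have blocks i : count_mem i (flatten (map blk (index_iota 1 d.+1))) = 1%N.
  exact: count_mem_composition_blocks.
transitivity (antisym (prod_det_rows A B blk (index_iota 1 d.+1)) u).
  rewrite rmorph_sum; apply: eq_bigr => s _.
  rewrite rmorphM rmorphXn rmorphN1 rmorph_prod; congr (_ * _).
  apply: eq_big_seq => j j_range; apply: etrans; first apply: bracket_eval.
    by move: (sizes j j_range); rewrite !size_cat !size_map addnA.
  rewrite !map_cat -!map_comp; congr (det_rows (_ ++ _ ++ _)).
  by apply: eq_map => i; rewrite /= !ffunE.
have [|w [i wi wu]] := rows_dependent (W := rowsub c M^T).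
  by rewrite ltnS (leq_trans (rank_rowsub_cols_S M hc) rank_S).
apply: (multilinear_dependent (u := u) (w := w) (i := i)) => //.
- exact/antisym_multilinear/prod_det_rows_multilinear.
- by apply: antisym_alternating; move/pcharf0P: hchar => ->.
- by rewrite -[RHS]wu; apply: eq_bigr => l _; rewrite ffunE row_rowsub.
Qed.
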